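(* Let $\mu>0$, let $X$ have the skew-symmetric-Laplace-uniform density with parameter $\mu$ (defined in the context), with cdf $G$, and let $M$ be a median, i.e. $G(M)=\tfrac12$. Put $G(0)=\tfrac12+\frac{e^{-\mu}-1}{2\mu}$ and $G(\mu)=1-e^{-\mu}$. Then: (i) if $G(0)>\tfrac12$, $M$ is a solution of $e^{M}(M-1+\mu)+e^{-\mu}-\mu=0$; (ii) if $G(0)\le\tfrac12<G(\mu)$, $M$ is a solution of $e^{-M}(-M-1-\mu)+e^{-\mu}+\mu=0$; (iii) if $G(\mu)\le\tfrac12$, then $M=\ln 2$.
   Context: For $\mu\in\mathbb{R}\setminus\{0\}$, the skew-symmetric-Laplace-uniform distribution $SSLUD(\mu)$ is the distribution on $\mathbb{R}$ with density $$g(x)=\begin{cases} 0 & \text{if } x/\mu<-1,\\ e^{-|x|}\left(\dfrac{x}{2\mu}+\dfrac12\right) & \text{if } -1\le x/\mu<1,\\ e^{-|x|} & \text{if } x/\mu\ge 1.\end{cases}$$ *)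

From Stdlib Require Import Reals.
From Coquelicot Require Import Coquelicot.
Open Scope R_scope.

Definition SSLUD_density (mu x : R) : R :=
  if Rlt_dec (x / mu) (-1) then 0
  else if Rlt_dec (x / mu) 1 then exp (- Rabs x) * (x / (2 * mu) + 1 / 2)
  else exp (- Rabs x).

Definition SSLUD_cdf (mu x : R) : R :=
  RInt_gen (SSLUD_density mu) (Rbar_locally m_infty) (at_point x).

From Stdlib Require Import Reals Psatz.
From Coquelicot Require Import Coquelicot.
Open Scope R_scope.

(* The density vanishes left of -mu and is an exponential times an affine
   function on [-mu, 0], [0, mu] and [mu, +oo), so G has a closed form on each
   piece.  These show that G < 1/2 on (-oo, 0] (so case (i) never occurs and
   M > 0), that G is strictly increasing on [0, mu], and that G >= G(mu)
   beyond mu.  Hence M lies in (0, mu) when G(mu) > 1/2 and in [mu, +oo)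
   otherwise, and equating the closed form there with 1/2 gives the stated
   equations. *)

Lemma is_RInt_antiderivative (f g G : R -> R) (a b : R) :
  a <= b ->
  (forall x, is_derive G x (g x)) ->
  (forall x, continuous g x) ->
  (forall x, a < x < b -> f x = g x) ->
  is_RInt f a b (G b - G a).
Proof.
  intros hab hG hg hfg.
  apply is_RInt_ext with g.
  - rewrite Rmin_left, Rmax_right by lra.
    intros x hx; symmetry; apply hfg; exact hx.
  - apply (is_RInt_derive G g); intros x _; [apply hG | apply hg].
Qed.

(* Chasles with [Rplus] instead of Coquelicot's [plus], which [apply] does not
   unify with. *)
Lemma is_RInt_Chasles_R (f : R -> R) (a b c l1 l2 : R) :
  is_RInt f a b l1 -> is_RInt f b c l2 -> is_RInt f a c (l1 + l2).
Proof. exact (is_RInt_Chasles f a b c l1 l2). Qed.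

Lemma is_RInt_gen_vanishing_tail (f : R -> R) (c : R) :
  (forall x, x < c -> f x = 0) ->
  is_RInt_gen f (Rbar_locally m_infty) (at_point c) 0.
Proof.
  intros hf P hP.
  apply Filter_prod with (fun a => a < c) (fun b => b = c).
  - exists c; tauto.
  - reflexivity.
  - intros a b ha hb; simpl in hb; subst b.
    exists 0; split; [| exact (locally_singleton _ _ hP)].
    apply is_RInt_ext with (fun _ => 0).
    2: { assert (h := is_RInt_const (V := R_NormedModule) a c 0).
         unfold scal, mult in h; simpl in h.
         rewrite Rmult_0_r in h; exact h. }
    intros x hx; simpl in hx; rewrite Rmax_right in hx by lra.
    symmetry; apply hf; tauto.
Qed.

Lemma RInt_gen_vanishing_tail (f : R -> R) (c x l : R) :
  (forall t, t < c -> f t = 0) ->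
  is_RInt f c x l ->
  RInt_gen f (Rbar_locally m_infty) (at_point x) = l.
Proof.
  intros hf hI.
  apply is_RInt_gen_unique.
  replace l with (plus 0 l) by (unfold plus; simpl; ring).
  apply (is_RInt_gen_Chasles f c).
  - apply is_RInt_gen_vanishing_tail; exact hf.
  - apply is_RInt_gen_at_point; exact hI.
Qed.

Lemma exp_mul_affine_le (a x : R) :
  -a <= x <= 0 -> exp x * (x - 1 + a) <= a - 1.
Proof.
  intros hx.
  pose proof (exp_ineq1_le x).
  pose proof (exp_pos x).
  assert (exp x <= 1).
  { rewrite <- exp_0; destruct (Req_dec x 0) as [-> | hx0]; [lra |].
    left; apply exp_increasing; lra. }
  nra.
Qed.

Lemma exp_opp_mul_affine_gt (a x : R) :
  0 <= x < a -> exp (- a) * (2 * a + 1) < exp (- x) * (x + 1 + a).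
Proof.
  intros hx.
  replace (- x) with (- a + (a - x)) by ring; rewrite exp_plus.
  pose proof (exp_ineq1 (a - x) ltac:(lra)).
  pose proof (exp_pos (- a)).
  assert (exp (a - x) * (x + 1 + a) > 2 * a + 1) by nra.
  nra.
Qed.

Section SSLUD.

Variable mu : R.
Hypothesis hmu : 0 < mu.

Lemma div_mu_mul x : x / mu * mu = x.
Proof. field; lra. Qed.

Lemma SSLUD_density_lt_neg_mu x : x < - mu -> SSLUD_density mu x = 0.
Proof.
  intros hx; unfold SSLUD_density; pose proof (div_mu_mul x).
  destruct (Rlt_dec (x / mu) (-1)); [reflexivity | nra].
Qed.

Lemma SSLUD_density_neg x :
  - mu < x < 0 -> SSLUD_density mu x = exp x * (x / (2 * mu) + 1 / 2).
Proof.
  intros hx; unfold SSLUD_density; pose proof (div_mu_mul x).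
  destruct (Rlt_dec (x / mu) (-1)); [nra |].
  destruct (Rlt_dec (x / mu) 1); [| nra].
  rewrite Rabs_left, Ropp_involutive by lra; reflexivity.
Qed.

Lemma SSLUD_density_pos x :
  0 < x < mu -> SSLUD_density mu x = exp (- x) * (x / (2 * mu) + 1 / 2).
Proof.
  intros hx; unfold SSLUD_density; pose proof (div_mu_mul x).
  destruct (Rlt_dec (x / mu) (-1)); [nra |].
  destruct (Rlt_dec (x / mu) 1); [| nra].
  rewrite Rabs_right by lra; reflexivity.
Qed.

Lemma SSLUD_density_gt_mu x : mu < x -> SSLUD_density mu x = exp (- x).
Proof.
  intros hx; unfold SSLUD_density; pose proof (div_mu_mul x).
  destruct (Rlt_dec (x / mu) (-1)); [nra |].
  destruct (Rlt_dec (x / mu) 1); [nra |].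
  rewrite Rabs_right by lra; reflexivity.
Qed.

Definition SSLUD_cdf_neg x := (exp x * (x - 1 + mu) + exp (- mu)) / (2 * mu).
Definition SSLUD_cdf_pos x :=
  1 + (exp (- mu) - exp (- x) * (x + 1 + mu)) / (2 * mu).

Lemma is_RInt_SSLUD_density_neg x :
  - mu <= x <= 0 -> is_RInt (SSLUD_density mu) (- mu) x (SSLUD_cdf_neg x).
Proof.
  intros hx.
  set (G t := exp t * (t - 1 + mu) / (2 * mu)).
  replace (SSLUD_cdf_neg x) with (G x - G (- mu))
    by (unfold G, SSLUD_cdf_neg; field; lra).
  apply (is_RInt_antiderivative _ (fun t => exp t * (t / (2 * mu) + 1 / 2)) G).
  - lra.
  - intros t; unfold G; auto_derive; [lra | field; lra].
  - intros t; apply (@ex_derive_continuous R_AbsRing R_NormedModule); auto_derive; auto.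
  - intros t ht; apply SSLUD_density_neg; lra.
Qed.

Lemma is_RInt_SSLUD_density_pos x :
  0 <= x <= mu -> is_RInt (SSLUD_density mu) 0 x
    (SSLUD_cdf_pos x - SSLUD_cdf_neg 0).
Proof.
  intros hx.
  set (G t := - exp (- t) * (t + 1 + mu) / (2 * mu)).
  replace (SSLUD_cdf_pos x - SSLUD_cdf_neg 0) with (G x - G 0)
    by (unfold G, SSLUD_cdf_pos, SSLUD_cdf_neg; rewrite Ropp_0, exp_0; field; lra).
  apply (is_RInt_antiderivative _ (fun t => exp (- t) * (t / (2 * mu) + 1 / 2)) G).
  - lra.
  - intros t; unfold G; auto_derive; [lra | field; lra].
  - intros t; apply (@ex_derive_continuous R_AbsRing R_NormedModule); auto_derive; auto.
  - intros t ht; apply SSLUD_density_pos; lra.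
Qed.

Lemma is_RInt_SSLUD_density_gt_mu x :
  mu <= x -> is_RInt (SSLUD_density mu) mu x (exp (- mu) - exp (- x)).
Proof.
  intros hx.
  set (G t := - exp (- t)).
  replace (exp (- mu) - exp (- x)) with (G x - G mu) by (unfold G; ring).
  apply (is_RInt_antiderivative _ (fun t => exp (- t)) G).
  - lra.
  - intros t; unfold G; auto_derive; [auto | ring].
  - intros t; apply (@ex_derive_continuous R_AbsRing R_NormedModule); auto_derive; auto.
  - intros t ht; apply SSLUD_density_gt_mu; lra.
Qed.

Lemma SSLUD_cdf_from_neg_mu x l :
  is_RInt (SSLUD_density mu) (- mu) x l -> SSLUD_cdf mu x = l.
Proof. apply RInt_gen_vanishing_tail, SSLUD_density_lt_neg_mu. Qed.

Lemma SSLUD_cdf_le_neg_mu x : x <= - mu -> SSLUD_cdf mu x = 0.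
Proof.
  intros hx; apply is_RInt_gen_unique, is_RInt_gen_vanishing_tail.
  intros t ht; apply SSLUD_density_lt_neg_mu; lra.
Qed.

Lemma SSLUD_cdf_neg_eq x : - mu <= x <= 0 -> SSLUD_cdf mu x = SSLUD_cdf_neg x.
Proof.
  intros hx; apply SSLUD_cdf_from_neg_mu, is_RInt_SSLUD_density_neg; exact hx.
Qed.

Lemma SSLUD_cdf_pos_mu : SSLUD_cdf_pos mu = 1 - exp (- mu).
Proof. unfold SSLUD_cdf_pos; field; lra. Qed.

Lemma is_RInt_SSLUD_density_upto_pos x :
  0 <= x <= mu -> is_RInt (SSLUD_density mu) (- mu) x (SSLUD_cdf_pos x).
Proof.
  intros hx.
  replace (SSLUD_cdf_pos x)
    with (SSLUD_cdf_neg 0 + (SSLUD_cdf_pos x - SSLUD_cdf_neg 0)) by ring.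
  apply is_RInt_Chasles_R with 0.
  - apply is_RInt_SSLUD_density_neg; lra.
  - apply is_RInt_SSLUD_density_pos; exact hx.
Qed.

Lemma SSLUD_cdf_pos_eq x : 0 <= x <= mu -> SSLUD_cdf mu x = SSLUD_cdf_pos x.
Proof.
  intros hx; apply SSLUD_cdf_from_neg_mu, is_RInt_SSLUD_density_upto_pos; exact hx.
Qed.

Lemma SSLUD_cdf_mu : SSLUD_cdf mu mu = 1 - exp (- mu).
Proof. rewrite SSLUD_cdf_pos_eq by lra; apply SSLUD_cdf_pos_mu. Qed.

Lemma SSLUD_cdf_ge_mu x : mu <= x -> SSLUD_cdf mu x = 1 - exp (- x).
Proof.
  intros hx; apply SSLUD_cdf_from_neg_mu.
  replace (1 - exp (- x))
    with ((1 - exp (- mu)) + (exp (- mu) - exp (- x))) by ring.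
  apply is_RInt_Chasles_R with mu.
  - rewrite <- SSLUD_cdf_pos_mu; apply is_RInt_SSLUD_density_upto_pos; lra.
  - apply is_RInt_SSLUD_density_gt_mu; exact hx.
Qed.

Lemma SSLUD_cdf_nonpos_lt_half x : x <= 0 -> SSLUD_cdf mu x < 1 / 2.
Proof.
  intros hx.
  destruct (Rle_lt_dec x (- mu)) as [hle | hlt].
  { rewrite SSLUD_cdf_le_neg_mu by exact hle; lra. }
  rewrite SSLUD_cdf_neg_eq by lra; unfold SSLUD_cdf_neg.
  assert (exp (- mu) < 1) by (rewrite <- exp_0; apply exp_increasing; lra).
  pose proof (exp_mul_affine_le mu x ltac:(lra)).
  apply Rlt_le_trans with ((mu - 1 + exp (- mu) + (1 - exp (- mu))) / (2 * mu)).
  - apply Rmult_lt_compat_r; [apply Rinv_0_lt_compat; lra | lra].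
  - right; field; lra.
Qed.

Lemma SSLUD_cdf_lt_cdf_mu x : 0 <= x < mu -> SSLUD_cdf mu x < SSLUD_cdf mu mu.
Proof.
  intros hx.
  rewrite !SSLUD_cdf_pos_eq by lra; unfold SSLUD_cdf_pos.
  pose proof (exp_opp_mul_affine_gt mu x hx).
  apply Rplus_lt_compat_l, Rmult_lt_compat_r; [apply Rinv_0_lt_compat |]; lra.
Qed.

Lemma SSLUD_cdf_mu_le x : mu <= x -> SSLUD_cdf mu mu <= SSLUD_cdf mu x.
Proof.
  intros hx.
  rewrite SSLUD_cdf_mu, SSLUD_cdf_ge_mu by exact hx.
  destruct (Req_dec x mu) as [-> | hne]; [lra |].
  assert (exp (- x) < exp (- mu)) by (apply exp_increasing; lra).
  lra.
Qed.

Lemma SSLUD_cdf_pos_eq_half x :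
  SSLUD_cdf_pos x = 1 / 2 -> exp (- x) * (- x - 1 - mu) + exp (- mu) + mu = 0.
Proof.
  unfold SSLUD_cdf_pos; intros hx.
  replace (exp (- x) * (- x - 1 - mu) + exp (- mu) + mu)
    with (2 * mu * ((exp (- mu) - exp (- x) * (x + 1 + mu)) / (2 * mu) + 1 / 2))
    by (field; lra).
  replace ((exp (- mu) - exp (- x) * (x + 1 + mu)) / (2 * mu)) with (- (1 / 2))
    by lra.
  ring.
Qed.

End SSLUD.

Lemma exp_opp_eq_half x : exp (- x) = 1 / 2 -> x = ln 2.
Proof.
  rewrite exp_Ropp; intros hx.
  assert (hexp : exp x = 2).
  { rewrite <- (Rinv_inv (exp x)), hx; field. }
  rewrite <- hexp, ln_exp; reflexivity.
Qed.

Theorem mainTheorem5 (mu M : R) (hmu : 0 < mu)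
  (hM : SSLUD_cdf mu M = 1 / 2) :
  (SSLUD_cdf mu 0 > 1 / 2 ->
     exp M * (M - 1 + mu) + exp (- mu) - mu = 0) /\
  (SSLUD_cdf mu 0 <= 1 / 2 < SSLUD_cdf mu mu ->
     exp (- M) * (- M - 1 - mu) + exp (- mu) + mu = 0) /\
  (SSLUD_cdf mu mu <= 1 / 2 -> M = ln 2).
Proof.
  assert (hM_pos : 0 < M).
  { destruct (Rle_lt_dec M 0) as [hle | hlt]; [| exact hlt].
    pose proof (SSLUD_cdf_nonpos_lt_half mu hmu M hle); lra. }
  split; [| split].
  - pose proof (SSLUD_cdf_nonpos_lt_half mu hmu 0 (Rle_refl 0)); lra.
  - intros [_ hmu_half].
    assert (hM_lt : M < mu).
    { destruct (Rlt_le_dec M mu) as [hlt | hge]; [exact hlt |].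
      pose proof (SSLUD_cdf_mu_le mu hmu M hge); lra. }
    apply (SSLUD_cdf_pos_eq_half mu hmu).
    rewrite <- SSLUD_cdf_pos_eq by lra; exact hM.
  - intros hmu_half.
    assert (hM_ge : mu <= M).
    { destruct (Rlt_le_dec M mu) as [hlt | hge]; [| exact hge].
      pose proof (SSLUD_cdf_lt_cdf_mu mu hmu M ltac:(lra)); lra. }
    apply exp_opp_eq_half.
    rewrite (SSLUD_cdf_ge_mu mu hmu M hM_ge) in hM; lra.
Qed.
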